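(* Let $\Phi(n)$ be an $\mathrm{st}_{\mathbb N}$-prenex formula, possibly with arbitrary (not necessarily standard) parameters. Then (in SPOT) $$\exists^{\mathrm{st}} S\;\forall^{\mathrm{st}} n\;\big(n\in S \iff n\in\mathbb N\wedge \Phi(n)\big).$$
   Context: We work in the theory SPOT. Its language is the $\in$-language (membership together with the usual defined symbols of mathematics such as $\mathbb N,\mathbb R,<,+,\cdot$) enriched by a unary predicate $\mathrm{st}$ (''$x$ is standard''). An $\in$-formula is a formula not mentioning $\mathrm{st}$. $\forall^{\mathrm{st}}x$ and $\exists^{\mathrm{st}}x$ denote quantifiers restricted to standard sets. The axioms of SPOT are: ZF; Transfer: for every $\in$-formula $\varphi(x)$ all of whose parameters are standard, $\forall^{\mathrm{st}}x\,\varphi(x)\to\forall x\,\varphi(x)$; Nontriviality: $\exists \nu\in\mathbb N\,\forall^{\mathrm{st}}n\in\mathbb N\,(n\neq\nu)$; Standard Part: $\forall A\subseteq\mathbb N\,\exists^{\mathrm{st}}B\subseteq\mathbb N\,\forall^{\mathrm{st}}n\in\mathbb N\,(n\in B\iff n\in A)$. A real $x$ is limited if $|x|\le n$ for some standard $n\in\mathbb N$; $x\approx r$ means $|x-r|\le 1/n$ for all standard $n\ge 1$; $x$ is infinitesimal if $x\approx 0$ and $x\ne0$; for limited $x$, $\mathrm{sh}(x)$ denotes the unique standard real $r$ with $x\approx r$. Write $\forall^{\mathrm{st}}_{\mathbb N}u\,\dots$ for $\forall u\,(u\in\mathbb N\wedge\mathrm{st}(u)\to\dots)$ and $\exists^{\mathrm{st}}_{\mathbb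 N}u\,\dots$ for $\exists u\,(u\in\mathbb N\wedge\mathrm{st}(u)\wedge\dots)$. An $\mathrm{st}_{\mathbb N}$-prenex formula is a formula of the form $\mathsf Q^{\mathrm{st}}_{\mathbb N}u_1\cdots\mathsf Q^{\mathrm{st}}_{\mathbb N}u_s\,\psi(u_1,\dots,u_s,v_1,\dots,v_r)$ where $\psi$ is an $\in$-formula and each $\mathsf Q$ is $\forall$ or $\exists$. *)

(* Semantic formalization of SPOT: a structure (V, mem, st)
   satisfying the ZF axioms (separation/replacement as schemas over
   deep-embedded in-formulas), Transfer (schema), Nontriviality, Standard Part. *)
From Stdlib Require Import List PeanoNat.
Import ListNotations.

Inductive form : Type :=
| FMem : nat -> nat -> form
| FEq  : nat -> nat -> form
| FFalse : form
| FImp : form -> form -> form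
| FAnd : form -> form -> form
| FOr  : form -> form -> form
| FAll : nat -> form -> form
| FEx  : nat -> form -> form.

Fixpoint free (p : form) (k : nat) : Prop :=
  match p with
  | FMem i j | FEq i j => k = i \/ k = j
  | FFalse => False
  | FImp a b | FAnd a b | FOr a b => free a k \/ free b k
  | FAll i a | FEx i a => k <> i /\ free a k
  end.

Definition upd {V : Type} (e : nat -> V) (i : nat) (x : V) : nat -> V :=
  fun j => if Nat.eqb j i then x else e j.

Fixpoint sat {V : Type} (mem : V -> V -> Prop) (e : nat -> V) (p : form) : Prop :=
  match p with
  | FMem i j => mem (e i) (e j)
  | FEq i j => e i = e j
  | FFalse => False
  | FImp a b => sat mem e a -> sat mem e b
  | FAnd a b => sat mem e a /\ sat mem e b
  | FOr a b => sat mem e a \/ sat mem e b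
  | FAll i a => forall x, sat mem (upd e i x) a
  | FEx i a => exists x, sat mem (upd e i x) a
  end.

Definition is_empty {V} (mem : V -> V -> Prop) (z : V) := forall w, ~ mem w z.
Definition is_succ {V} (mem : V -> V -> Prop) (y s : V) :=
  forall w, mem w s <-> (mem w y \/ w = y).
Definition inductive {V} (mem : V -> V -> Prop) (a : V) :=
  (exists z, mem z a /\ is_empty mem z) /\
  (forall y, mem y a -> exists s, mem s a /\ is_succ mem y s).
Definition isNat {V} (mem : V -> V -> Prop) (x : V) :=
  forall a, inductive mem a -> mem x a.

Record SPOT : Type := {
  V :> Type;
  mem : V -> V -> Prop;
  st : V -> Prop;
  ax_ext : forall a b, (forall x, mem x a <-> mem x b) -> a = b;
  ax_found : forall a, (exists x, mem x a) ->
             exists x, mem x a /\ ~ (exists z, mem z x /\ mem z a);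
  ax_pair : forall a b, exists c, forall x, mem x c <-> (x = a \/ x = b);
  ax_union : forall a, exists u, forall x, mem x u <-> exists y, mem y a /\ mem x y;
  ax_power : forall a, exists p, forall x, mem x p <-> (forall z, mem z x -> mem z a);
  ax_inf : exists a, inductive mem a;
  ax_sep : forall (p : form) (i : nat) (e : nat -> V) (a : V),
           exists b, forall x, mem x b <-> (mem x a /\ sat mem (upd e i x) p);
  ax_repl : forall (p : form) (i j : nat) (e : nat -> V) (a : V), i <> j ->
           (forall x, mem x a -> exists y, sat mem (upd (upd e i x) j y) p /\
               forall y', sat mem (upd (upd e i x) j y') p -> y' = y) ->
           exists b, forall y, mem y b <->
             exists x, mem x a /\ sat mem (upd (upd e i x) j y) p;
  ax_transfer : forall (p : form) (x : nat) (e : nat -> V),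
           (forall y, y <> x -> free p y -> st (e y)) ->
           (forall a, st a -> sat mem (upd e x a) p) ->
           forall a, sat mem (upd e x a) p;
  ax_nontriv : exists nu, isNat mem nu /\
           forall n, isNat mem n -> st n -> n <> nu;
  ax_stpart : forall A, (forall x, mem x A -> isNat mem x) ->
           exists B, st B /\ (forall x, mem x B -> isNat mem x) /\
             forall n, isNat mem n -> st n -> (mem n B <-> mem n A)
}.

Inductive quant := QAll | QEx.

Fixpoint sat_prenex (M : SPOT) (qs : list (quant * nat)) (psi : form)
    (e : nat -> M) : Prop :=
  match qs with
  | [] => sat (mem M) e psi
  | (QAll, u) :: qs' => forall x : M, isNat (mem M) x -> st M x ->
                        sat_prenex M qs' psi (upd e u x)
  | (QEx, u) :: qs' => exists x : M, isNat (mem M) x /\ st M x /\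
                        sat_prenex M qs' psi (upd e u x)
  end.

(* Induction on the quantifier prefix, proving the statement for a tuple of
   variables instead of the single n; tuples of natural numbers are coded by
   natural numbers through an ∈-definable injective pairing relation.  For the
   matrix, Standard Part applied to the internal set of codes of satisfying tuples
   gives a standard set of codes.  If S is a standard set of codes for Ψ(b, ns),
   the set T of codes m ∈ ℕ (of tuples ns) such that for all b ∈ ℕ every code of
   (m, b) lies in S is definable from S alone, so Transfer gives a standard such T;
   Transfer also reduces the internal quantifiers in the definition of T to
   standard b and standard codes, on which S is correct, so T codes ∀^st b Ψ.
   The case of ∃^st b is dual. *)

From Stdlib Require Import List PeanoNat Lia Classical ClassicalEpsilon.
Import ListNotations.

Section Spot.

Variable M : SPOT.

Local Notation "x ∈ y" := (mem M x y) (at level 70).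
Local Notation sat := (sat (mem M)).
Local Notation isN := (isNat (mem M)).
Local Notation std := (st M).

(** * Definability of properties of environments *)

Lemma upd_eq (e : nat -> M) i x : upd e i x i = x.
Proof. unfold upd; now rewrite Nat.eqb_refl. Qed.

Lemma upd_neq (e : nat -> M) i x j : j <> i -> upd e i x j = e j.
Proof. intro H; unfold upd; apply Nat.eqb_neq in H; now rewrite H. Qed.

Lemma upd_agree (e1 e2 : nat -> M) i x (Q : nat -> Prop) :
  (forall v, Q v -> v <> i -> e1 v = e2 v) -> forall v, Q v -> upd e1 i x v = upd e2 i x v.
Proof.
  intros H v Hv; destruct (Nat.eq_dec v i) as [->|Hvi].
  - now rewrite !upd_eq.
  - rewrite !upd_neq by exact Hvi; auto.
Qed.

Lemma sat_agree f : forall e1 e2 : nat -> M,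
  (forall v, free f v -> e1 v = e2 v) -> (sat e1 f <-> sat e2 f).
Proof.
  induction f as [i j|i j| |f IHf g IHg|f IHf g IHg|f IHf g IHg|i f IHf|i f IHf];
    intros e1 e2 H; simpl in *.
  - now rewrite (H i), (H j) by auto.
  - now rewrite (H i), (H j) by auto.
  - tauto.
  - rewrite (IHf e1 e2), (IHg e1 e2) by auto; tauto.
  - rewrite (IHf e1 e2), (IHg e1 e2) by auto; tauto.
  - rewrite (IHf e1 e2), (IHg e1 e2) by auto; tauto.
  - split; intros Hx x; [rewrite <- (IHf (upd e1 i x)) | rewrite (IHf _ (upd e2 i x))];
      auto; apply upd_agree; auto.
  - split; intros [x Hx]; exists x; [rewrite <- (IHf (upd e1 i x)) | rewrite (IHf _ (upd e2 i x))];
      auto; apply upd_agree; auto.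
Qed.

Fixpoint free_list (f : form) : list nat :=
  match f with
  | FMem i j | FEq i j => [i; j]
  | FFalse => []
  | FImp a b | FAnd a b | FOr a b => free_list a ++ free_list b
  | FAll _ a | FEx _ a => free_list a
  end.

Lemma free_list_spec f v : free f v -> In v (free_list f).
Proof.
  induction f; simpl; rewrite ?in_app_iff; intuition (subst; auto).
Qed.

Definition definable (L : list nat) (P : (nat -> M) -> Prop) :=
  exists f, (forall v, free f v -> In v L) /\ forall env, sat env f <-> P env.

Lemma definable_sat f : definable (free_list f) (fun env => sat env f).
Proof. exists f; split; [exact (free_list_spec f) | tauto]. Qed.

Lemma definable_agree L P e1 e2 :
  definable L P -> (forall v, In v L -> e1 v = e2 v) -> (P e1 <-> P e2).
Proof.
  intros [f [Hf Hs]] H; rewrite <- !Hs; apply sat_agree; auto.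
Qed.

Lemma definable_ext L P Q :
  definable L P -> (forall env, P env <-> Q env) -> definable L Q.
Proof. intros [f [Hf Hs]] H; exists f; split; [exact Hf | intro; now rewrite Hs]. Qed.

Lemma definable_incl L L' P : definable L P -> incl L L' -> definable L' P.
Proof. intros [f [Hf Hs]] H; exists f; split; auto. Qed.

Lemma definable_mem L i j : In i L -> In j L -> definable L (fun env => env i ∈ env j).
Proof. intros; exists (FMem i j); split; simpl; [intros v [-> | ->]; auto | tauto]. Qed.

Lemma definable_eq L i j : In i L -> In j L -> definable L (fun env => env i = env j).
Proof. intros; exists (FEq i j); split; simpl; [intros v [-> | ->]; auto | tauto]. Qed.

Lemma definable_False L : definable L (fun _ => False).
Proof. exists FFalse; split; simpl; tauto. Qed.

Lemma definable_True L : definable L (fun _ => True).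
Proof. exists (FImp FFalse FFalse); split; simpl; tauto. Qed.

Lemma definable_imp L P Q :
  definable L P -> definable L Q -> definable L (fun env => P env -> Q env).
Proof.
  intros [f [Hf Hs]] [g [Hg Hg']]; exists (FImp f g); split; simpl.
  - intros v [H | H]; auto.
  - intro; rewrite Hs, Hg'; tauto.
Qed.

Lemma definable_and L P Q :
  definable L P -> definable L Q -> definable L (fun env => P env /\ Q env).
Proof.
  intros [f [Hf Hs]] [g [Hg Hg']]; exists (FAnd f g); split; simpl.
  - intros v [H | H]; auto.
  - intro; rewrite Hs, Hg'; tauto.
Qed.

Lemma definable_or L P Q :
  definable L P -> definable L Q -> definable L (fun env => P env \/ Q env).
Proof.
  intros [f [Hf Hs]] [g [Hg Hg']]; exists (FOr f g); split; simpl.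
  - intros v [H | H]; auto.
  - intro; rewrite Hs, Hg'; tauto.
Qed.

Lemma definable_not L P : definable L P -> definable L (fun env => ~ P env).
Proof. intro H; exact (definable_imp L P _ H (definable_False L)). Qed.

Lemma definable_iff L P Q :
  definable L P -> definable L Q -> definable L (fun env => P env <-> Q env).
Proof.
  intros HP HQ; apply (definable_ext _ (fun env => (P env -> Q env) /\ (Q env -> P env))).
  - apply definable_and; apply definable_imp; assumption.
  - intro; tauto.
Qed.

Lemma definable_forall_upd L0 L i P Q :
  definable L0 P -> (forall v, In v L0 -> v = i \/ In v L) ->
  (forall env, Q env <-> forall x, P (upd env i x)) -> definable L Q.
Proof.
  intros [f [Hf Hs]] HL HQ; exists (FAll i f); split.
  - simpl; intros v [H1 H2]; destruct (HL v (Hf v H2)); [congruence | assumption].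
  - intro env; simpl; rewrite HQ; split; intros H x; apply Hs; auto; apply H.
Qed.

Lemma definable_exists_upd L0 L i P Q :
  definable L0 P -> (forall v, In v L0 -> v = i \/ In v L) ->
  (forall env, Q env <-> exists x, P (upd env i x)) -> definable L Q.
Proof.
  intros [f [Hf Hs]] HL HQ; exists (FEx i f); split.
  - simpl; intros v [H1 H2]; destruct (HL v (Hf v H2)); [congruence | assumption].
  - intro env; simpl; rewrite HQ; split; intros [x H]; exists x; apply Hs; auto.
Qed.

(** The bound variable is stored in [i], which [B] must not otherwise read. *)
Lemma definable_forall i L (B : (nat -> M) -> M -> Prop) :
  definable (i :: L) (fun env => B env (env i)) ->
  (forall env x, B (upd env i x) x <-> B env x) ->
  definable L (fun env => forall x, B env x).
Proof.
  intros HB Hi; apply (definable_forall_upd _ _ i _ _ HB); [intros v [H | H]; auto |].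
  intro env; split; intros H x; [rewrite upd_eq, Hi; apply H |].
  specialize (H x); rewrite upd_eq, Hi in H; exact H.
Qed.

Lemma definable_exists i L (B : (nat -> M) -> M -> Prop) :
  definable (i :: L) (fun env => B env (env i)) ->
  (forall env x, B (upd env i x) x <-> B env x) ->
  definable L (fun env => exists x, B env x).
Proof.
  intros HB Hi; apply (definable_exists_upd _ _ i _ _ HB); [intros v [H | H]; auto |].
  intro env; split; intros [x H]; exists x.
  - now rewrite upd_eq, Hi.
  - now rewrite upd_eq, Hi in H.
Qed.

Definition fresh (L : list nat) : nat := S (fold_right max 0 L).

Lemma fresh_not_In L : ~ In (fresh L) L.
Proof.
  assert (Hmax : forall v, In v L -> v <= fold_right max 0 L).
  { induction L as [|a L IH]; simpl; intros v Hv; [tauto |].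
    destruct Hv as [-> | Hv]; [lia | specialize (IH v Hv); lia]. }
  unfold fresh; intro H; apply Hmax in H; lia.
Qed.

Definition definable1 (P : M -> Prop) :=
  forall L i, In i L -> definable L (fun env => P (env i)).
Definition definable2 (P : M -> M -> Prop) :=
  forall L i j, In i L -> In j L -> definable L (fun env => P (env i) (env j)).
Definition definable3 (P : M -> M -> M -> Prop) :=
  forall L i j k, In i L -> In j L -> In k L ->
  definable L (fun env => P (env i) (env j) (env k)).
Definition definable4 (P : M -> M -> M -> M -> Prop) :=
  forall L i j k l, In i L -> In j L -> In k L -> In l L ->
  definable L (fun env => P (env i) (env j) (env k) (env l)).

Ltac solve_upd_neq := let E := fresh "E" in intro E; subst; simpl in *; tauto.

Ltac simpl_upd := repeat match goal with
  | |- context [upd ?e ?i ?x ?i] => rewrite (upd_eq e i x)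
  | |- context [upd ?e ?i ?x ?j] => rewrite (upd_neq e i x j) by solve_upd_neq
  end.

Ltac solve_definable :=
  match goal with
  | |- definable ?L (fun env => forall x : V M, @?B env x) =>
      let t := fresh "t" in let Ht := fresh "Ht" in
      pose (t := fresh L); assert (Ht : ~ In t L) by apply fresh_not_In; clearbody t;
      apply (definable_forall t L B);
      [cbv beta; solve_definable | intros; cbv beta; simpl_upd; reflexivity]
  | |- definable ?L (fun env => exists x : V M, @?B env x) =>
      let t := fresh "t" in let Ht := fresh "Ht" in
      pose (t := fresh L); assert (Ht : ~ In t L) by apply fresh_not_In; clearbody t;
      apply (definable_exists t L B);
      [cbv beta; solve_definable | intros; cbv beta; simpl_upd; reflexivity]
  | |- definable ?L (fun env => @?A env /\ @?B env) =>
      apply (definable_and L A B); cbv beta; solve_definable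
  | |- definable ?L (fun env => @?A env \/ @?B env) =>
      apply (definable_or L A B); cbv beta; solve_definable
  | |- definable ?L (fun env => @?A env <-> @?B env) =>
      apply (definable_iff L A B); cbv beta; solve_definable
  | |- definable ?L (fun env => ~ @?A env) =>
      apply (definable_not L A); cbv beta; solve_definable
  | |- definable ?L (fun env => @?A env -> @?B env) =>
      apply (definable_imp L A B); cbv beta; solve_definable
  | |- definable ?L (fun env => False) => apply definable_False
  | |- definable ?L (fun env => True) => apply definable_True
  | |- definable ?L (fun env => env ?i ∈ env ?j) => apply definable_mem; simpl; tauto
  | |- definable ?L (fun env => env ?i = env ?j) => apply definable_eq; simpl; tauto
  | H : definable1 ?P |- definable ?L (fun env => ?P (env ?i)) =>
      apply H; simpl; tauto
  | H : definable2 ?P |- definable ?L (fun env => ?P (env ?i) (env ?j)) =>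
      apply H; simpl; tauto
  | H : definable3 ?P |- definable ?L (fun env => ?P (env ?i) (env ?j) (env ?k)) =>
      apply H; simpl; tauto
  | H : definable4 ?P |- definable ?L (fun env => ?P (env ?i) (env ?j) (env ?k) (env ?l)) =>
      apply H; simpl; tauto
  end.

Lemma definable1_is_empty : definable1 (is_empty (mem M)).
Proof. intros L i Hi; unfold is_empty; solve_definable. Qed.

Lemma definable2_is_succ : definable2 (is_succ (mem M)).
Proof. intros L i j Hi Hj; unfold is_succ; solve_definable. Qed.

Lemma definable1_inductive : definable1 (inductive (mem M)).
Proof.
  intros L i Hi; pose proof definable1_is_empty; pose proof definable2_is_succ.
  unfold inductive; solve_definable.
Qed.

Lemma definable1_isNat : definable1 isN.
Proof. intros L i Hi; pose proof definable1_inductive; unfold isNat; solve_definable. Qed.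


(** * Transfer and separation *)

Lemma transfer_forall L P i (e : nat -> M) :
  definable L P -> (forall y, In y L -> y <> i -> std (e y)) ->
  (forall a, std a -> P (upd e i a)) -> forall a, P (upd e i a).
Proof.
  intros [f [Hf Hs]] He H a; apply Hs, (ax_transfer M f i e).
  - intros y Hyi Hfy; apply He; auto.
  - intros b Hb; apply Hs; auto.
Qed.

Lemma transfer_exists L P i (e : nat -> M) :
  definable L P -> (forall y, In y L -> y <> i -> std (e y)) ->
  (exists a, P (upd e i a)) -> exists a, std a /\ P (upd e i a).
Proof.
  intros HP He [a Ha]; apply NNPP; intro Hn.
  apply (transfer_forall L (fun env => ~ P env) i e) with a; auto.
  - now apply definable_not.
  - intros b Hb HPb; eauto.
Qed.

Lemma transfer_forall4 R (p q r : M) :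
  definable4 R -> std p -> std q -> std r ->
  (forall a, std a -> R p q r a) -> forall a, R p q r a.
Proof.
  intros HR Hp Hq Hr H a.
  apply (transfer_forall [0; 1; 2; 3] (fun env => R (env 0) (env 1) (env 2) (env 3)) 3
           (upd (upd (fun _ => r) 0 p) 1 q)).
  - apply HR; simpl; tauto.
  - intros y Hy Hy3; simpl in Hy; unfold upd; simpl.
    destruct Hy as [<- | [<- | [<- | [<- | []]]]]; simpl; auto; congruence.
  - exact H.
Qed.

Lemma transfer_exists4 R (p q r : M) :
  definable4 R -> std p -> std q -> std r ->
  (exists a, R p q r a) -> exists a, std a /\ R p q r a.
Proof.
  intros HR Hp Hq Hr [a Ha].
  apply (transfer_exists [0; 1; 2; 3] (fun env => R (env 0) (env 1) (env 2) (env 3)) 3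
           (upd (upd (fun _ => r) 0 p) 1 q)).
  - apply HR; simpl; tauto.
  - intros y Hy Hy3; simpl in Hy; unfold upd; simpl.
    destruct Hy as [<- | [<- | [<- | [<- | []]]]]; simpl; auto; congruence.
  - now exists a.
Qed.

Lemma separation L P (e : nat -> M) i a :
  definable L P -> exists b, forall x, x ∈ b <-> x ∈ a /\ P (upd e i x).
Proof.
  intros [f [Hf Hs]]; destruct (ax_sep M f i e a) as [b Hb].
  exists b; intro x; rewrite Hb, Hs; tauto.
Qed.

Lemma separation1 P a : definable1 P -> exists b, forall x, x ∈ b <-> x ∈ a /\ P x.
Proof.
  intro HP; destruct (separation [0] (fun env => P (env 0)) (fun _ => a) 0 a) as [b Hb].
  - apply HP; simpl; tauto.
  - exists b; intro x; now rewrite Hb, upd_eq.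
Qed.

Lemma omega_exists : exists W, forall x, x ∈ W <-> isN x.
Proof.
  destruct (ax_inf M) as [a Ha].
  destruct (separation1 isN a definable1_isNat) as [W HW].
  exists W; intro x; rewrite HW; split; [tauto | intro Hx; split; auto].
Qed.

(** Transfer turns the internal set [{x ∈ ω | R s x}] into a standard one. *)
Lemma standard_separation (R : M -> M -> Prop) (s : M) :
  definable2 R -> std s -> exists T, std T /\ forall x, x ∈ T <-> isN x /\ R s x.
Proof.
  intros HR Hs; destruct omega_exists as [W HW].
  destruct (separation [0; 1] (fun env => R (env 1) (env 0)) (fun _ => s) 0 W) as [T0 HT0].
  { apply HR; simpl; tauto. }
  pose proof definable1_isNat.
  destruct (transfer_exists4 (fun s _ _ T => forall x, x ∈ T <-> isN x /\ R s x) s s s)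
    as [T [HTs HT]]; auto.
  - intros L i j k l Hi Hj Hk Hl; cbv beta; solve_definable.
  - exists T0; intro x; rewrite HT0, HW, upd_eq; rewrite upd_neq by discriminate; tauto.
  - now exists T.
Qed.

(** * Natural numbers, pairs and relations *)

Lemma zero_exists : exists z : M, is_empty (mem M) z.
Proof. destruct (ax_inf M) as [a [[z [_ Hz]] _]]; eauto. Qed.

Lemma pair_exists (a b : M) : exists c, forall x, x ∈ c <-> x = a \/ x = b.
Proof. apply ax_pair. Qed.

Lemma succ_exists (y : M) : exists s, is_succ (mem M) y s.
Proof.
  destruct (pair_exists y y) as [s1 Hs1]; destruct (pair_exists y s1) as [c Hc].
  destruct (ax_union M c) as [u Hu]; exists u; intro w; rewrite Hu; split.
  - intros [z [Hz Hwz]]; apply Hc in Hz; destruct Hz as [-> | ->]; auto.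
    apply Hs1 in Hwz; tauto.
  - intros [H | H].
    + exists y; split; [apply Hc |]; auto.
    + exists s1; split; [apply Hc | apply Hs1]; auto.
Qed.

Definition zero : M := proj1_sig (constructive_indefinite_description _ zero_exists).
Definition succ (y : M) : M := proj1_sig (constructive_indefinite_description _ (succ_exists y)).

Lemma zero_spec : is_empty (mem M) zero.
Proof. unfold zero; destruct constructive_indefinite_description; auto. Qed.

Lemma succ_spec y : is_succ (mem M) y (succ y).
Proof. unfold succ; destruct constructive_indefinite_description; auto. Qed.

Lemma empty_is_zero z : is_empty (mem M) z -> z = zero.
Proof.
  intro Hz; apply (ax_ext M); intro x; split; intro Hx;
    [destruct (Hz x Hx) | destruct (zero_spec x Hx)].
Qed.

Lemma succ_unique y s : is_succ (mem M) y s -> s = succ y.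
Proof. intro H; apply (ax_ext M); intro x; rewrite (H x), (succ_spec y x); tauto. Qed.

Lemma in_succ_self y : y ∈ succ y.
Proof. apply succ_spec; auto. Qed.

Lemma isNat_zero : isN zero.
Proof. intros a [[z [Hz He]] _]; now rewrite <- (empty_is_zero z He). Qed.

Lemma isNat_succ n : isN n -> isN (succ n).
Proof.
  intros Hn a [H0 HS]; destruct (HS n (Hn a (conj H0 HS))) as [s [Hs Hss]].
  now rewrite <- (succ_unique _ _ Hss).
Qed.

Lemma zero_neq_succ n : zero <> succ n.
Proof. intro H; apply (zero_spec n); rewrite H; apply in_succ_self. Qed.

(** Foundation excludes [a ∈ b ∈ a]. *)
Lemma succ_inj a b : succ a = succ b -> a = b.
Proof.
  intro H.
  assert (Ha : a ∈ succ b) by (rewrite <- H; apply in_succ_self).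
  assert (Hb : b ∈ succ a) by (rewrite H; apply in_succ_self).
  apply succ_spec in Ha; apply succ_spec in Hb.
  destruct Ha as [Ha | Ha]; [| exact Ha]; destruct Hb as [Hb | Hb]; [| now symmetry].
  destruct (pair_exists a b) as [c Hc].
  destruct (ax_found M c) as [x [Hx Hmin]]; [exists a; apply Hc; auto |].
  apply Hc in Hx; destruct Hx as [-> | ->]; exfalso; apply Hmin.
  - exists b; split; [| apply Hc]; auto.
  - exists a; split; [| apply Hc]; auto.
Qed.

Lemma nat_induction (P : M -> Prop) :
  definable1 P -> P zero -> (forall n, isN n -> P n -> P (succ n)) ->
  forall n, isN n -> P n.
Proof.
  intros HP H0 HS n Hn; destruct omega_exists as [W HW].
  destruct (separation1 P W HP) as [b Hb].
  assert (Hind : inductive (mem M) b).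
  { split.
    - exists zero; split; [apply Hb; split; [apply HW, isNat_zero | exact H0] | apply zero_spec].
    - intros y Hy; apply Hb in Hy; destruct Hy as [Hy HPy]; apply HW in Hy.
      exists (succ y); split; [| apply succ_spec].
      apply Hb; split; [apply HW, isNat_succ | apply HS]; auto. }
  now apply Hb, Hn.
Qed.

Definition is_kpair (p a b : M) := forall w, w ∈ p <->
  ((forall t, t ∈ w <-> t = a) \/ (forall t, t ∈ w <-> t = a \/ t = b)).

Lemma definable3_is_kpair : definable3 is_kpair.
Proof. intros L i j k Hi Hj Hk; unfold is_kpair; solve_definable. Qed.

Lemma kpair_exists a b : exists p, is_kpair p a b.
Proof.
  destruct (pair_exists a a) as [s1 H1]; destruct (pair_exists a b) as [s2 H2].
  destruct (pair_exists s1 s2) as [p Hp]; exists p; intro w; rewrite Hp; split.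
  - intros [-> | ->]; [left | right]; intro t; [rewrite H1 | rewrite H2]; tauto.
  - intros [H | H]; [left | right]; apply (ax_ext M); intro t; rewrite H;
      [rewrite H1 | rewrite H2]; tauto.
Qed.

Lemma kpair_inj p a b a' b' : is_kpair p a b -> is_kpair p a' b' -> a = a' /\ b = b'.
Proof.
  intros Hp Hq; destruct (pair_exists a a) as [w1 H1].
  assert (Ea : a' = a).
  { assert (Hw : w1 ∈ p) by (apply Hp; left; intro t; rewrite H1; tauto).
    apply Hq in Hw; destruct Hw as [Hw | Hw];
      assert (Ha' : a' ∈ w1) by (apply Hw; auto); apply H1 in Ha'; tauto. }
  subst a'; split; [reflexivity |].
  destruct (pair_exists a b) as [w2 H2]; destruct (pair_exists a b') as [w3 H3].
  assert (Hb : b = a \/ b = b').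
  { assert (Hw : w2 ∈ p) by (apply Hp; right; intro t; rewrite H2; tauto).
    apply Hq in Hw; assert (Hbw : b ∈ w2) by (apply H2; auto).
    destruct Hw as [Hw | Hw]; apply Hw in Hbw; tauto. }
  assert (Hb' : b' = a \/ b' = b).
  { assert (Hw : w3 ∈ p) by (apply Hq; right; intro t; rewrite H3; tauto).
    apply Hp in Hw; assert (Hbw : b' ∈ w3) by (apply H3; auto).
    destruct Hw as [Hw | Hw]; apply Hw in Hbw; tauto. }
  destruct Hb as [Hb | Hb]; [destruct Hb' as [Hb' | Hb'] |]; congruence.
Qed.

(** Kuratowski pairs of elements of [Z] lie in the double power set of [Z]. *)
Lemma kpair_bound (Z : M) :
  exists X, forall p a b, a ∈ Z -> b ∈ Z -> is_kpair p a b -> p ∈ X.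
Proof.
  destruct (ax_power M Z) as [P1 H1]; destruct (ax_power M P1) as [P2 H2].
  exists P2; intros p a b Ha Hb Hp; apply H2; intros w Hw; apply H1; intros z Hz.
  apply Hp in Hw; destruct Hw as [Hw | Hw]; apply Hw in Hz; intuition congruence.
Qed.

Lemma union2_bound (A B : M) : exists Y, forall x, x ∈ A \/ x ∈ B -> x ∈ Y.
Proof.
  destruct (pair_exists A B) as [c Hc]; destruct (ax_union M c) as [u Hu].
  exists u; intros x [H | H]; apply Hu; [exists A | exists B]; split; auto; apply Hc; auto.
Qed.

Definition in_rel2 (R a b : M) := exists p, is_kpair p a b /\ p ∈ R.
Definition in_rel3 (R x y z : M) := exists q, is_kpair q y z /\ in_rel2 R x q.

Lemma definable3_in_rel2 : definable3 in_rel2.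
Proof.
  intros L i j k Hi Hj Hk; pose proof definable3_is_kpair; unfold in_rel2; solve_definable.
Qed.

Lemma definable4_in_rel3 : definable4 in_rel3.
Proof.
  intros L i j k l Hi Hj Hk Hl; pose proof definable3_is_kpair; pose proof definable3_in_rel2.
  unfold in_rel3; solve_definable.
Qed.

Lemma rel2_comprehension (Q : M -> M -> Prop) :
  definable2 Q -> exists R, forall a b, in_rel2 R a b <-> isN a /\ isN b /\ Q a b.
Proof.
  intro HQ; destruct omega_exists as [W HW]; destruct (kpair_bound W) as [X HX].
  assert (HD : definable1 (fun p => exists a b, isN a /\ isN b /\ Q a b /\ is_kpair p a b)).
  { pose proof definable1_isNat; pose proof definable3_is_kpair; intros L i Hi; solve_definable. }
  destruct (separation1 _ X HD) as [R HR]; exists R; intros a b; split.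
  - intros [p [Hp HpR]]; apply HR in HpR; destruct HpR as [_ [a' [b' [Ha [Hb [Hab Hp']]]]]].
    destruct (kpair_inj _ _ _ _ _ Hp Hp') as [-> ->]; auto.
  - intros [Ha [Hb Hab]]; destruct (kpair_exists a b) as [p Hp]; exists p; split; [exact Hp |].
    apply HR; split; [apply (HX p a b); auto; apply HW; auto | exists a, b; auto].
Qed.

Lemma rel3_comprehension (Q : M -> M -> M -> Prop) :
  definable3 Q -> exists R, forall x y z, in_rel3 R x y z <-> isN x /\ isN y /\ isN z /\ Q x y z.
Proof.
  intro HQ; destruct omega_exists as [W HW]; destruct (kpair_bound W) as [X2 HX2].
  destruct (union2_bound W X2) as [Y HY]; destruct (kpair_bound Y) as [X3 HX3].
  assert (HD : definable1 (fun p => exists x y z q, isN x /\ isN y /\ isN z /\ Q x y z /\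
                                     is_kpair q y z /\ is_kpair p x q)).
  { pose proof definable1_isNat; pose proof definable3_is_kpair; intros L i Hi; solve_definable. }
  destruct (separation1 _ X3 HD) as [R HR]; exists R; intros x y z; split.
  - intros [q [Hq [p [Hp HpR]]]]; apply HR in HpR.
    destruct HpR as [_ [x' [y' [z' [q' [Hx [Hy [Hz [HQxyz [Hq' Hp']]]]]]]]]].
    destruct (kpair_inj _ _ _ _ _ Hp Hp') as [-> ->].
    destruct (kpair_inj _ _ _ _ _ Hq Hq') as [-> ->]; auto.
  - intros (Hx & Hy & Hz & HQxyz).
    destruct (kpair_exists y z) as [q Hq]; destruct (kpair_exists x q) as [p Hp].
    exists q; split; [exact Hq |]; exists p; split; [exact Hp |].
    apply HR; split; [| exists x, y, z, q; tauto].
    apply (HX3 p x q); auto; apply HY; [left; apply HW; auto |].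
    right; apply (HX2 q y z); auto; apply HW; auto.
Qed.

(** * An injective coding of pairs of natural numbers *)

Definition twice_closed (R : M) :=
  (exists z, is_empty (mem M) z /\ in_rel2 R z z) /\
  (forall a b a' b1 b', in_rel2 R a b -> is_succ (mem M) a a' -> is_succ (mem M) b b1 ->
     is_succ (mem M) b1 b' -> in_rel2 R a' b').

(** [twice n m] says [m = 2n], as the least relation containing [(0, 0)] and
    closed under [(a, b) ↦ (a + 1, b + 2)]. *)
Definition twice (n m : M) := forall R, twice_closed R -> in_rel2 R n m.

Lemma definable2_twice : definable2 twice.
Proof.
  intros L i j Hi Hj; pose proof definable1_is_empty; pose proof definable2_is_succ;
    pose proof definable3_in_rel2; unfold twice, twice_closed; solve_definable.
Qed.

Lemma twice_zero : twice zero zero.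
Proof. intros R [[z [Hz HR]] _]; now rewrite <- (empty_is_zero z Hz). Qed.

Lemma twice_succ n m : twice n m -> twice (succ n) (succ (succ m)).
Proof.
  intros H R HR; pose proof (H R HR) as Hnm; destruct HR as [_ HR].
  apply (HR n m _ (succ m)); auto; apply succ_spec.
Qed.

Lemma twice_ind (Q : M -> M -> Prop) :
  definable2 Q -> Q zero zero ->
  (forall n m, isN n -> isN m -> Q n m -> Q (succ n) (succ (succ m))) ->
  forall n m, twice n m -> isN n /\ isN m /\ Q n m.
Proof.
  intros HQ H0 HS n m Hnm; destruct (rel2_comprehension Q HQ) as [R HR].
  apply HR, Hnm; split.
  - exists zero; split; [apply zero_spec | apply HR; auto using isNat_zero].
  - intros a b a' b1 b' Hab Ha' Hb1 Hb'; apply HR in Hab; destruct Hab as (Ha & Hb & HQab).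
    rewrite (succ_unique _ _ Ha'), (succ_unique _ _ Hb'), (succ_unique _ _ Hb1).
    apply HR; auto using isNat_succ.
Qed.

Lemma twice_isNat n m : twice n m -> isN n /\ isN m.
Proof.
  intro H; destruct (twice_ind (fun _ _ => True)) with n m as (? & ? & _); auto.
  intros L i j _ _; apply definable_True.
Qed.

Lemma twice_inv n m : twice n m ->
  (n = zero /\ m = zero) \/ exists n0 m0, twice n0 m0 /\ n = succ n0 /\ m = succ (succ m0).
Proof.
  intro H.
  destruct (twice_ind (fun n m => twice n m /\
     ((is_empty (mem M) n /\ is_empty (mem M) m) \/
      exists n0 m0 m1, twice n0 m0 /\ is_succ (mem M) n0 n /\ is_succ (mem M) m0 m1 /\
                       is_succ (mem M) m1 m))) with n m
    as (_ & _ & _ & [[Hn Hm] | (n0 & m0 & m1 & Hnm0 & Hn & Hm1 & Hm)]); auto.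
  - intros L i j Hi Hj; pose proof definable2_twice; pose proof definable1_is_empty;
      pose proof definable2_is_succ; solve_definable.
  - split; [apply twice_zero | left; split; apply zero_spec].
  - intros n1 m1 _ _ [Hd _]; split; [now apply twice_succ |].
    right; exists n1, m1, (succ m1); repeat split; auto; apply succ_spec.
  - left; split; apply empty_is_zero; auto.
  - right; exists n0, m0; split; [exact Hnm0 | split; [now apply succ_unique |]].
    now rewrite (succ_unique _ _ Hm), (succ_unique _ _ Hm1).
Qed.

Lemma twice_inj n n' m : twice n m -> twice n' m -> n' = n.
Proof.
  intros H; revert n'.
  destruct (twice_ind (fun n m => forall n', twice n' m -> n' = n)) with n m as (_ & _ & HQ);
    auto.
  - intros L i j Hi Hj; pose proof definable2_twice; solve_definable.
  - intros n' Hn'; apply twice_inv in Hn'.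
    destruct Hn' as [[-> _] | (n0 & m0 & _ & _ & E)]; [reflexivity |].
    destruct (zero_neq_succ _ E).
  - intros n1 m1 _ _ IH n' Hn'; apply twice_inv in Hn'.
    destruct Hn' as [[_ E] | (n0 & m0 & Hd & -> & E)]; [destruct (zero_neq_succ _ (eq_sym E)) |].
    apply succ_inj, succ_inj in E; subst m0; now rewrite (IH n0).
Qed.

Lemma twice_neq_succ_twice a d b d' : twice a d -> twice b d' -> d <> succ d'.
Proof.
  intros Had Hbd'.
  enough (HQ : forall b d' s, twice b d' -> is_succ (mem M) d' s -> d <> s)
    by (apply (HQ b d'); auto; apply succ_spec).
  destruct (twice_ind (fun a d => forall b d' s, twice b d' -> is_succ (mem M) d' s -> d <> s))
    with a d as (_ & _ & HQ); auto.
  - intros L i j Hi Hj; pose proof definable2_twice; pose proof definable2_is_succ;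
      solve_definable.
  - intros b0 d0 s _ Hs E; rewrite (succ_unique _ _ Hs) in E; exact (zero_neq_succ _ E).
  - intros n m _ _ IH b0 d0 s Hb Hs E; rewrite (succ_unique _ _ Hs) in E.
    apply succ_inj in E; subst d0; apply twice_inv in Hb.
    destruct Hb as [[_ E] | (n0 & m0 & Hd & _ & E)]; [exact (zero_neq_succ _ (eq_sym E)) |].
    apply succ_inj in E; apply (IH n0 m0 (succ m0)); auto; apply succ_spec.
Qed.

Lemma twice_total n : isN n -> exists m, twice n m.
Proof.
  revert n; apply nat_induction.
  - intros L i Hi; pose proof definable2_twice; solve_definable.
  - exists zero; apply twice_zero.
  - intros n _ [m Hm]; exists (succ (succ m)); now apply twice_succ.
Qed.

Definition pair_code_closed (R : M) :=
  (exists z, is_empty (mem M) z /\ in_rel3 R z z z) /\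
  (forall x y z d x' d', in_rel3 R x y z -> twice z d -> is_succ (mem M) x x' ->
     is_succ (mem M) d d' -> in_rel3 R x' y d') /\
  (forall x y z d y' d1 d2, in_rel3 R x y z -> twice z d -> is_succ (mem M) y y' ->
     is_succ (mem M) d d1 -> is_succ (mem M) d1 d2 -> in_rel3 R x y' d2).

(** [pair_code x y z]: [z] codes [(x, y)], where [0] codes [(0, 0)] and a code [z]
    of [(x, y)] yields the codes [2z + 1] of [(x + 1, y)] and [2z + 2] of
    [(x, y + 1)]. A pair has many codes (one per lattice path from the origin),
    but the parity of codes makes every code determine its pair. *)
Definition pair_code (x y z : M) := forall R, pair_code_closed R -> in_rel3 R x y z.

Lemma definable3_pair_code : definable3 pair_code.
Proof.
  intros L i j k Hi Hj Hk; pose proof definable1_is_empty; pose proof definable2_is_succ;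
    pose proof definable2_twice; pose proof definable4_in_rel3.
  unfold pair_code, pair_code_closed; solve_definable.
Qed.

Lemma pair_code_zero : pair_code zero zero zero.
Proof. intros R [[z [Hz HR]] _]; now rewrite <- (empty_is_zero z Hz). Qed.

Lemma pair_code_succ_l x y z d : pair_code x y z -> twice z d -> pair_code (succ x) y (succ d).
Proof.
  intros H Hd R HR; pose proof (H R HR) as Hxyz; destruct HR as [_ [HR _]].
  apply (HR x y z d); auto; apply succ_spec.
Qed.

Lemma pair_code_succ_r x y z d :
  pair_code x y z -> twice z d -> pair_code x (succ y) (succ (succ d)).
Proof.
  intros H Hd R HR; pose proof (H R HR) as Hxyz; destruct HR as [_ [_ HR]].
  apply (HR x y z d _ (succ d)); auto; apply succ_spec.
Qed.

Lemma pair_code_ind (Q : M -> M -> M -> Prop) :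
  definable3 Q -> Q zero zero zero ->
  (forall x y z d, isN x -> isN y -> isN z -> Q x y z -> twice z d -> Q (succ x) y (succ d)) ->
  (forall x y z d, isN x -> isN y -> isN z -> Q x y z -> twice z d ->
     Q x (succ y) (succ (succ d))) ->
  forall x y z, pair_code x y z -> isN x /\ isN y /\ isN z /\ Q x y z.
Proof.
  intros HQ H0 HSx HSy x y z Hxyz; destruct (rel3_comprehension Q HQ) as [R HR].
  apply HR, Hxyz; split; [| split].
  - exists zero; split; [apply zero_spec | apply HR; auto using isNat_zero].
  - intros x0 y0 z0 d x' d' HT Hd Hx' Hd'; apply HR in HT; destruct HT as (Hx & Hy & Hz & HQ0).
    rewrite (succ_unique _ _ Hx'), (succ_unique _ _ Hd').
    apply HR; repeat split; auto using isNat_succ.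
    + apply isNat_succ, (twice_isNat _ _ Hd).
    + now apply (HSx x0 y0 z0 d).
  - intros x0 y0 z0 d y' d1 d2 HT Hd Hy' Hd1 Hd2; apply HR in HT;
      destruct HT as (Hx & Hy & Hz & HQ0).
    rewrite (succ_unique _ _ Hy'), (succ_unique _ _ Hd2), (succ_unique _ _ Hd1).
    apply HR; repeat split; auto using isNat_succ.
    + apply isNat_succ, isNat_succ, (twice_isNat _ _ Hd).
    + now apply (HSy x0 y0 z0 d).
Qed.

Lemma pair_code_isNat x y z : pair_code x y z -> isN z.
Proof.
  intro H; destruct (pair_code_ind (fun _ _ _ => True)) with x y z as (_ & _ & ? & _); auto.
  intros L i j k _ _ _; apply definable_True.
Qed.

Lemma pair_code_inv x y w : pair_code x y w ->
  (x = zero /\ y = zero /\ w = zero) \/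
  (exists x0 z d, x = succ x0 /\ pair_code x0 y z /\ twice z d /\ w = succ d) \/
  (exists y0 z d, y = succ y0 /\ pair_code x y0 z /\ twice z d /\ w = succ (succ d)).
Proof.
  intro H.
  destruct (pair_code_ind (fun x y w => pair_code x y w /\
     ((is_empty (mem M) x /\ is_empty (mem M) y /\ is_empty (mem M) w) \/
      (exists x0 z d, is_succ (mem M) x0 x /\ pair_code x0 y z /\ twice z d /\
                      is_succ (mem M) d w) \/
      (exists y0 z d d1, is_succ (mem M) y0 y /\ pair_code x y0 z /\ twice z d /\
                         is_succ (mem M) d d1 /\ is_succ (mem M) d1 w))))
    with x y w as (_ & _ & _ & _ & Hshape); auto.
  - intros L i j k Hi Hj Hk; pose proof definable3_pair_code; pose proof definable2_twice;
      pose proof definable1_is_empty; pose proof definable2_is_succ; solve_definable.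
  - split; [apply pair_code_zero | left; repeat split; apply zero_spec].
  - intros x0 y0 z0 d _ _ _ [Hp _] Hd; split; [now apply (pair_code_succ_l _ _ z0) |].
    right; left; exists x0, z0, d; repeat split; auto; apply succ_spec.
  - intros x0 y0 z0 d _ _ _ [Hp _] Hd; split; [now apply (pair_code_succ_r _ _ z0) |].
    right; right; exists y0, z0, d, (succ d); repeat split; auto; apply succ_spec.
  - destruct Hshape as [(Hx & Hy & Hw) | [(x0 & z & d & Hx & Hp & Hd & Hw) |
                                           (y0 & z & d & d1 & Hy & Hp & Hd & Hd1 & Hw)]].
    + left; repeat split; apply empty_is_zero; auto.
    + right; left; exists x0, z, d; repeat split; auto; apply succ_unique; auto.
    + right; right; exists y0, z, d; repeat split; auto; [apply succ_unique; auto |].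
      now rewrite (succ_unique _ _ Hw), (succ_unique _ _ Hd1).
Qed.

Lemma pair_code_inj x y z x' y' : pair_code x y z -> pair_code x' y' z -> x' = x /\ y' = y.
Proof.
  intros H; revert x' y'.
  destruct (pair_code_ind (fun x y z => forall x' y', pair_code x' y' z -> x' = x /\ y' = y))
    with x y z as (_ & _ & _ & HQ); auto.
  - intros L i j k Hi Hj Hk; pose proof definable3_pair_code; solve_definable.
  - intros x' y' Hp; apply pair_code_inv in Hp.
    destruct Hp as [(-> & -> & _) | [(x0 & z0 & d & _ & _ & _ & E) |
                                      (y0 & z0 & d & _ & _ & _ & E)]];
      [auto | |]; destruct (zero_neq_succ _ E).
  - intros x0 y0 z0 d _ _ _ IH Hd x' y' Hp; apply pair_code_inv in Hp.
    destruct Hp as [(_ & _ & E) | [(x1 & z1 & d1 & -> & Hp1 & Hd1 & E) |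
                                    (y1 & z1 & d1 & _ & _ & Hd1 & E)]];
      [destruct (zero_neq_succ _ (eq_sym E)) | | ]; apply succ_inj in E.
    + subst d1; rewrite (twice_inj _ _ _ Hd Hd1) in Hp1; destruct (IH _ _ Hp1) as [-> ->]; auto.
    + destruct (twice_neq_succ_twice _ _ _ _ Hd Hd1 E).
  - intros x0 y0 z0 d _ _ _ IH Hd x' y' Hp; apply pair_code_inv in Hp.
    destruct Hp as [(_ & _ & E) | [(x1 & z1 & d1 & _ & _ & Hd1 & E) |
                                    (y1 & z1 & d1 & -> & Hp1 & Hd1 & E)]];
      [destruct (zero_neq_succ _ (eq_sym E)) | | ]; apply succ_inj in E.
    + destruct (twice_neq_succ_twice _ _ _ _ Hd1 Hd (eq_sym E)).
    + apply succ_inj in E; subst d1; rewrite (twice_inj _ _ _ Hd Hd1) in Hp1.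
      destruct (IH _ _ Hp1) as [-> ->]; auto.
Qed.

Lemma pair_code_total x y : isN x -> isN y -> exists z, pair_code x y z.
Proof.
  assert (Hzero : forall y0, isN y0 -> exists z w, is_empty (mem M) w /\ pair_code w y0 z).
  { apply nat_induction.
    - intros L i Hi; pose proof definable3_pair_code; pose proof definable1_is_empty;
        solve_definable.
    - exists zero, zero; split; [apply zero_spec | apply pair_code_zero].
    - intros y0 _ (z & w & Hw & Hz); rewrite (empty_is_zero _ Hw) in Hz.
      destruct (twice_total z (pair_code_isNat _ _ _ Hz)) as [d Hd].
      exists (succ (succ d)), zero; split; [apply zero_spec |].
      now apply (pair_code_succ_r _ _ z). }
  intros Hx; revert x Hx y.
  apply (nat_induction (fun x => forall y, isN y -> exists z, pair_code x y z)).
  - intros L i Hi; pose proof definable3_pair_code; pose proof definable1_isNat; solve_definable.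
  - intros y Hy; destruct (Hzero y Hy) as (z & w & Hw & Hz).
    rewrite (empty_is_zero _ Hw) in Hz; eauto.
  - intros x _ IH y Hy; destruct (IH y Hy) as [z Hz].
    destruct (twice_total z (pair_code_isNat _ _ _ Hz)) as [d Hd].
    exists (succ d); now apply (pair_code_succ_l _ _ z).
Qed.

Lemma pair_code_standard x y :
  isN x -> isN y -> std x -> std y -> exists z, std z /\ pair_code x y z.
Proof.
  intros Hx Hy Hxs Hys; pose proof definable3_pair_code.
  apply (transfer_exists4 (fun x y _ z => pair_code x y z) x y x); auto.
  - intros L i j k l Hi Hj Hk Hl; cbv beta; solve_definable.
  - now apply pair_code_total.
Qed.

(** * Standard sets of codes *)

Lemma definable_subst_var L P v w :
  definable L P -> w <> v -> definable (w :: L) (fun env => P (upd env v (env w))).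
Proof.
  intros HP Hwv.
  apply (definable_exists_upd (v :: w :: L) _ v (fun env => env v = env w /\ P env)).
  - apply definable_and; [apply definable_eq; simpl; tauto |].
    apply (definable_incl L); [exact HP | intros y Hy; simpl; auto].
  - intros y [-> | Hy]; auto.
  - intro env; split.
    + intro H; exists (env w); now rewrite upd_eq, upd_neq.
    + intros [x Hx]; rewrite upd_eq, upd_neq in Hx by exact Hwv; now destruct Hx as [-> Hx].
Qed.

Fixpoint assign (e : nat -> M) (vs : list nat) (ns : list M) : nat -> M :=
  match vs, ns with
  | v :: vs', n :: ns' => upd (assign e vs' ns') v n
  | _, _ => e
  end.

Lemma assign_out e vs ns z : ~ In z vs -> assign e vs ns z = e z.
Proof.
  revert ns; induction vs as [|v vs IH]; intros ns Hz; [reflexivity |].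
  destruct ns as [|n ns]; [reflexivity |]; simpl in Hz |- *.
  rewrite upd_neq by (intros ->; tauto); apply IH; tauto.
Qed.

Lemma assign_agree e1 e2 vs ns z : length ns = length vs ->
  (~ In z vs -> e1 z = e2 z) -> assign e1 vs ns z = assign e2 vs ns z.
Proof.
  revert ns; induction vs as [|v vs IH]; intros [|n ns] Hl Hz; try discriminate.
  - apply Hz; simpl; tauto.
  - simpl in Hl, Hz |- *; destruct (Nat.eq_dec z v) as [-> | Hzv]; [now rewrite !upd_eq |].
    rewrite !upd_neq by exact Hzv; apply IH; [congruence |]; intro; apply Hz; intuition congruence.
Qed.

(** [m] codes the pair of a code of [ns] and [a]; a quantifier step adds its
    variable as the new head, matching the outermost update in [assign]. *)
Fixpoint tuple_code (a : M) (ns : list M) (m : M) : Prop :=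
  match ns with
  | [] => m = a
  | b :: ns' => exists c, tuple_code b ns' c /\ pair_code c a m
  end.

Lemma tuple_code_isNat a ns m : isN a -> tuple_code a ns m -> isN m.
Proof.
  destruct ns as [|b ns]; simpl; [now intros Ha -> |].
  intros _ (c & _ & Hc); exact (pair_code_isNat _ _ _ Hc).
Qed.

Lemma tuple_code_inj a ns a' ns' m :
  length ns = length ns' -> tuple_code a ns m -> tuple_code a' ns' m -> a = a' /\ ns = ns'.
Proof.
  revert a a' ns' m; induction ns as [|b ns IH]; intros a a' ns' m Hl H H';
    destruct ns' as [|b' ns']; try discriminate; simpl in H, H'.
  - now subst.
  - destruct H as (c & Hc & Hp); destruct H' as (c' & Hc' & Hp').
    destruct (pair_code_inj _ _ _ _ _ Hp Hp') as [-> ->].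
    injection Hl as Hl; destruct (IH _ _ _ _ Hl Hc Hc') as [-> ->]; auto.
Qed.

Lemma definable_tuple_code vs : forall v L K mv, mv <> v -> definable L K ->
  exists L', definable L' (fun env => exists a ns, length ns = length vs /\ isN a /\
    Forall isN ns /\ tuple_code a ns (env mv) /\ K (assign env (v :: vs) (a :: ns))).
Proof.
  induction vs as [|u vs IH]; intros v L K mv Hmv HK.
  - exists (mv :: L).
    apply (definable_ext _ (fun env => isN (env mv) /\ K (upd env v (env mv)))).
    + apply definable_and; [apply definable1_isNat; simpl; auto |].
      now apply definable_subst_var.
    + intro env; split.
      * intros [Ha HKa]; exists (env mv), []; repeat split; auto.
      * intros (a & [|] & Hl & Ha & _ & Hc & HKa); [simpl in Hc; subst; auto | discriminate].
  - (* [a] is kept in the fresh variable [w], the code of the tail in [cv]. *)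
    set (w := fresh (v :: mv :: u :: vs ++ L)).
    set (cv := fresh (w :: v :: mv :: u :: vs ++ L)).
    assert (Hw : ~ In w (v :: mv :: u :: vs ++ L)) by apply fresh_not_In.
    assert (Hcv : ~ In cv (w :: v :: mv :: u :: vs ++ L)) by apply fresh_not_In.
    clearbody w cv; simpl in Hw, Hcv; rewrite in_app_iff in Hw, Hcv.
    destruct (IH u (w :: L) (fun env => K (upd env v (env w))) cv)
      as [L3 HInner]; [intuition congruence | apply definable_subst_var; intuition congruence |].
    set (Inner := fun env : nat -> M => exists b ns, _) in HInner.
    set (P := fun env : nat -> M =>
                isN (env w) /\ pair_code (env cv) (env w) (env mv) /\ Inner env).
    assert (HP : definable (w :: cv :: mv :: L3) P).
    { pose proof definable1_isNat; pose proof definable3_pair_code.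
      apply definable_and; [solve_definable |]; apply definable_and; [solve_definable |].
      apply (definable_incl L3); [exact HInner | intros y Hy; simpl; auto]. }
    exists (w :: cv :: mv :: L3).
    apply (definable_exists_upd (w :: cv :: mv :: L3) _ w
             (fun env => exists c, P (upd env cv c))).
    { refine (definable_exists_upd _ _ cv P _ HP _ _);
        [intros y Hy; right; exact Hy | reflexivity]. }
    { intros; auto. }
    assert (HK_upd : forall env a c ns, length ns = length (u :: vs) ->
      K (upd (assign (upd (upd env w a) cv c) (u :: vs) ns) v
             (assign (upd (upd env w a) cv c) (u :: vs) ns w)) <->
      K (upd (assign env (u :: vs) ns) v a)).
    { intros env a c ns Hl; rewrite assign_out by (simpl; tauto).
      rewrite upd_neq, upd_eq by intuition congruence.
      apply (definable_agree _ _ _ _ HK); intros z Hz.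
      apply (upd_agree _ _ _ _ (fun y => In y L)); [| exact Hz].
      intros y Hy _; apply assign_agree; [exact Hl |]; intros _; rewrite !upd_neq; auto;
        intros ->; tauto. }
    intro env; split.
    + intros (a & [|b ns] & Hl & Ha & Hns & Hc & HKa); [discriminate |].
      destruct Hc as (c & Hc & Hp); inversion Hns; subst.
      exists a, c; unfold P, Inner.
      rewrite (upd_neq _ cv c w), upd_eq, upd_eq, (upd_neq _ cv c mv), (upd_neq _ w a mv)
        by intuition congruence.
      repeat split; auto; exists b, ns; repeat split; auto.
      now apply HK_upd; [simpl in Hl |- *; congruence |].
    + intros (a & c & HPac); unfold P, Inner in HPac.
      rewrite (upd_neq _ cv c w), upd_eq, upd_eq, (upd_neq _ cv c mv), (upd_neq _ w a mv)
        in HPac by intuition congruence.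
      destruct HPac as (Ha & Hp & b & ns & Hl & Hb & Hns & Hc & HKb).
      exists a, (b :: ns); repeat split; auto; [simpl; congruence | exists c; auto |].
      apply HK_upd in HKb; [exact HKb | simpl; congruence].
Qed.

Definition std_nat (x : M) := isN x /\ std x.

(** A tuple has many codes, and every standard code of a standard tuple must
    decide [R]. *)
Definition std_coded (k : nat) (R : M -> list M -> Prop) :=
  exists S, std S /\ (forall x, x ∈ S -> isN x) /\
    forall a ns m, length ns = k -> std_nat a -> Forall std_nat ns -> std m ->
      tuple_code a ns m -> (m ∈ S <-> R a ns).

Lemma std_coded_sat psi (e : nat -> M) v vs :
  std_coded (length vs) (fun a ns => sat (assign e (v :: vs) (a :: ns)) psi).
Proof.
  set (mv := fresh (v :: free_list psi)).
  assert (Hmv : ~ In mv (v :: free_list psi)) by apply fresh_not_In.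
  clearbody mv; simpl in Hmv.
  destruct (definable_tuple_code vs v (free_list psi) (fun env => sat env psi) mv) as [L HL];
    [intuition congruence | apply definable_sat |].
  destruct omega_exists as [W HW].
  destruct (separation _ _ e mv W HL) as [A HA].
  destruct (ax_stpart M A) as (B & HBs & HBnat & HBA);
    [intros x Hx; apply HA, proj1, HW in Hx; exact Hx |].
  exists B; split; [exact HBs | split; [exact HBnat |]].
  intros a ns m Hl [Ha Has] Hns Hms Hm.
  assert (Hsat : forall a' ns', length ns' = length vs ->
    sat (assign (upd e mv m) (v :: vs) (a' :: ns')) psi <->
    sat (assign e (v :: vs) (a' :: ns')) psi).
  { intros a' ns' Hl'; apply sat_agree; intros y Hy; apply assign_agree; [simpl; congruence |].
    intros _; apply free_list_spec in Hy; rewrite upd_neq; intuition congruence. }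
  rewrite HBA, HA, HW, upd_eq by (auto; exact (tuple_code_isNat _ _ _ Ha Hm)); split.
  - intros (_ & a' & ns' & Hl' & _ & _ & Hm' & Hsat'); apply Hsat in Hsat'; [| exact Hl'].
    destruct (tuple_code_inj a ns a' ns' m) as [-> ->]; auto; congruence.
  - intro Hs; split; [exact (tuple_code_isNat _ _ _ Ha Hm) |].
    exists a, ns; repeat split; auto.
    + eapply Forall_impl; [| exact Hns]; intros n [Hn _]; exact Hn.
    + now apply Hsat.
Qed.

Lemma std_coded_forall k R :
  std_coded (S k) R -> std_coded k (fun a ns => forall b, isN b -> std b -> R b (a :: ns)).
Proof.
  intros (S' & HS's & _ & HS').
  destruct (standard_separation
              (fun s m => forall b, isN b -> forall m', pair_code m b m' -> m' ∈ s) S')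
    as (T & HTs & HT); [| exact HS's |].
  { pose proof definable1_isNat; pose proof definable3_pair_code.
    intros L i j Hi Hj; solve_definable. }
  exists T; split; [exact HTs | split; [intros x Hx; now apply HT in Hx |]].
  intros a ns m Hl Ha Hns Hms Hm; rewrite HT; split.
  - intros [_ Hall] b Hb Hbs.
    destruct (pair_code_standard m b) as (m' & Hm's & Hm'); auto.
    + exact (tuple_code_isNat _ _ _ (proj1 Ha) Hm).
    + apply (HS' b (a :: ns) m'); try split; simpl; auto; [now exists m | now apply (Hall b)].
  - intro Hall; split; [exact (tuple_code_isNat _ _ _ (proj1 Ha) Hm) |].
    pose proof definable1_isNat; pose proof definable3_pair_code.
    apply (transfer_forall4 (fun m s _ b => isN b -> forall m', pair_code m b m' -> m' ∈ s)
             m S' m); auto; [intros L i j k' l Hi Hj Hk Hl'; cbv beta; solve_definable |].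
    intros b Hbs Hb.
    apply (transfer_forall4 (fun m b s m' => pair_code m b m' -> m' ∈ s) m b S'); auto;
      [intros L i j k' l Hi Hj Hk Hl'; cbv beta; solve_definable |].
    intros m' Hm's Hm'; apply (HS' b (a :: ns) m'); try split; simpl; auto.
    now exists m.
Qed.

Lemma std_coded_exists k R :
  std_coded (S k) R -> std_coded k (fun a ns => exists b, isN b /\ std b /\ R b (a :: ns)).
Proof.
  intros (S' & HS's & _ & HS').
  destruct (standard_separation
              (fun s m => exists b, isN b /\ exists m', pair_code m b m' /\ m' ∈ s) S')
    as (T & HTs & HT); [| exact HS's |].
  { pose proof definable1_isNat; pose proof definable3_pair_code.
    intros L i j Hi Hj; solve_definable. }
  exists T; split; [exact HTs | split; [intros x Hx; now apply HT in Hx |]].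
  intros a ns m Hl Ha Hns Hms Hm; rewrite HT; split.
  - intros [_ Hex]; pose proof definable1_isNat; pose proof definable3_pair_code.
    destruct (transfer_exists4 (fun m s _ b => isN b /\ exists m', pair_code m b m' /\ m' ∈ s)
                m S' m) as (b & Hbs & Hb & Hbm); auto.
    { intros L i j k' l Hi Hj Hk Hl'; cbv beta; solve_definable. }
    destruct (transfer_exists4 (fun m b s m' => pair_code m b m' /\ m' ∈ s) m b S')
      as (m' & Hm's & Hm' & Hm'S); auto.
    { intros L i j k' l Hi Hj Hk Hl'; cbv beta; solve_definable. }
    exists b; repeat split; auto; apply (HS' b (a :: ns) m'); try split; simpl; auto.
    now exists m.
  - intros (b & Hb & Hbs & HR); split; [exact (tuple_code_isNat _ _ _ (proj1 Ha) Hm) |].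
    destruct (pair_code_standard m b) as (m' & Hm's & Hm'); auto.
    + exact (tuple_code_isNat _ _ _ (proj1 Ha) Hm).
    + exists b; split; [exact Hb |]; exists m'; split; [exact Hm' |].
      apply (HS' b (a :: ns) m'); try split; simpl; auto; now exists m.
Qed.

Lemma std_coded_prenex qs psi (e : nat -> M) : forall v vs,
  std_coded (length vs) (fun a ns => sat_prenex M qs psi (assign e (v :: vs) (a :: ns))).
Proof.
  induction qs as [|[[|] u] qs IH]; intros v vs.
  - apply std_coded_sat.
  - exact (std_coded_forall _ _ (IH u (v :: vs))).
  - exact (std_coded_exists _ _ (IH u (v :: vs))).
Qed.

End Spot.

Theorem proposition2p7 (M : SPOT) (qs : list (quant * nat)) (psi : form)
    (nv : nat) (e : nat -> M) :
  exists S : M, st M S /\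
    forall n : M, st M n ->
      (mem M n S <-> (isNat (mem M) n /\ sat_prenex M qs psi (upd e nv n))).
Proof.
  destruct (std_coded_prenex M qs psi e nv []) as (S & HSs & HSnat & HS).
  exists S; split; [exact HSs |]; intros n Hn.
  assert (HSn : isNat (mem M) n -> mem M n S <-> sat_prenex M qs psi (upd e nv n))
    by (intro Hnat; apply (HS n [] n); repeat split; auto).
  split.
  - intro HnS; pose proof (HSnat n HnS) as Hnat; split; [exact Hnat | now apply HSn].
  - intros [Hnat Hsat]; now apply HSn.
Qed.
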